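(* There is a polynomial-time algorithm that, given a temporal graph $\mathcal{G}$ and a single source vertex $v$, computes a solution of \textsc{ReachFast} with source set $\{v\}$ of minimum value whenever a solution exists. No bound is placed on the number of delays or on the total delay.
   Context: A temporal graph $\mathcal{G}=\langle G,(E_1,\dots,E_{t_{\max}})\rangle$ consists of a static graph $G=(V,E)$ and edge sets $E_i\subseteq E$ with $E=\bigcup_i E_i$. An edge $e$ has label $i$ if $e\in E_i$, and an edge may have several labels. A temporal path from $v_1$ to $v_{m+1}$ is a sequence $(v_jv_{j+1},t_j)_{j=1}^m$ with $v_jv_{j+1}\in E_{t_j}$ and $t_1<\dots<t_m$; its arrival time is $t_m$. The reaching time $\mathrm{reachtime}(v,\mathcal{G})$ is the least $t$ such that $v$ reaches every vertex by a temporal path with arrival time at most $t$ ($v$ reaches itself at time $0$), and it is $\infty$ otherwise. Delaying a label $i$ of an edge by a positive integer $\delta$ replaces it by $i+\delta$; the new label may exceed $t_{\max}$. A solution of \textsc{ReachFast} with source set $S$ is a temporal graph $\mathcal{G}'$ obtained from $\mathcal{G}$ by delaying any number of labels (each by any amount) such that every source reaches every vertex. Its value is $\max_{s\in S}\mathrm{reachtime}(s,\mathcal{G}')$. *)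

From mathcomp Require Import all_boot.
Set Implicit Arguments. Unset Strict Implicit. Unset Printing Implicit Defensive.

(* A temporal graph on vertex set {0,...,n-1} is given by its set of
   (edge, label) occurrences: a triple (u, w, t) with u < w < n means that
   the edge {u,w} carries label t (i.e. {u,w} \in E_t).  The static edge set
   E is the set of edges occurring in some triple (E = \bigcup_i E_i).
   The list is read as a SET (duplicates are irrelevant). *)
Definition label := (nat * nat * nat)%type.

Definition wf_tgraph (n : nat) (L : seq label) : Prop :=
  forall u w t, (u, w, t) \in L -> [/\ u < w, w < n & 0 < t].

Definition has_label (L : seq label) (x y t : nat) : Prop :=
  (x, y, t) \in L \/ (y, x, t) \in L.

Fixpoint is_tpath (L : seq label) (x prev : nat) (p : seq (nat * nat)) (y : nat)
  : Prop :=
  match p with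
  | [::] => x = y
  | (z, t) :: p' => [/\ has_label L x z t, prev < t & is_tpath L z t p' y]
  end.

(* arrival time (0 for the empty path, i.e. x reaches itself at time 0) *)
Definition arrival (p : seq (nat * nat)) : nat := last 0 (map snd p).

Definition reaches_by (L : seq label) (x y T : nat) : Prop :=
  exists p, is_tpath L x 0 p y /\ arrival p <= T.

Definition reaches_all_by (n : nat) (L : seq label) (x T : nat) : Prop :=
  forall y, y < n -> reaches_by L x y T.

Definition reachtime_is (n : nat) (L : seq label) (x t : nat) : Prop :=
  reaches_all_by n L x t /\ forall t', reaches_all_by n L x t' -> t <= t'.

(* L' is obtained from L by delaying labels: each label occurrence (e,i) is
   replaced by (e, i + d(e,i)), with d(e,i) = 0 meaning "not delayed" and
   d(e,i) > 0 meaning "delayed by d(e,i)".  Label sets are sets (=i). *)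
Definition delayed_from (L L' : seq label) : Prop :=
  exists d : label -> nat, L' =i [seq (x.1.1, x.1.2, x.2 + d x) | x <- L].

Definition reachfast_solution (n : nat) (L : seq label) (v : nat) (L' : seq label)
  : Prop :=
  delayed_from L L' /\ exists T, reaches_all_by n L' v T.

Definition reachfast_optimal (n : nat) (L : seq label) (v : nat) (L' : seq label)
  : Prop :=
  reachfast_solution n L v L' /\
  exists t, reachtime_is n L' v t /\
    forall L'' t'', reachfast_solution n L v L'' -> reachtime_is n L'' v t'' ->
      t <= t''.

(* Registers/memory M : nat -> nat, indirect addressing, addition and
   truncated subtraction (no multiplication); each instruction costs 1.
   This model is polynomially equivalent to Turing machines. *)
Inductive instr : Type :=
| IConst of nat & nat
| IAdd of nat & nat & nat
| ISub of nat & nat & nat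
| ILoad of nat & nat
| IStore of nat & nat
| IJz of nat & nat
| IHalt.

Definition upd (M : nat -> nat) (r x : nat) : nat -> nat :=
  fun i => if i == r then x else M i.

(* one step; None = halted (IHalt, or pc outside the program) *)
Definition step (P : seq instr) (s : nat * (nat -> nat))
  : option (nat * (nat -> nat)) :=
  let: (pc, M) := s in
  match nth IHalt P pc with
  | IConst r c => Some (pc.+1, upd M r c)
  | IAdd r a b => Some (pc.+1, upd M r (M a + M b))
  | ISub r a b => Some (pc.+1, upd M r (M a - M b))
  | ILoad r a => Some (pc.+1, upd M r (M (M a)))
  | IStore a b => Some (pc.+1, upd M (M a) (M b))
  | IJz a l => Some (if M a == 0 then l else pc.+1, M)
  | IHalt => None
  end.

Fixpoint exec (P : seq instr) (fuel : nat) (s : nat * (nat -> nat))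
  : option (nat -> nat) :=
  match fuel with
  | 0 => None
  | f.+1 => match step P s with
            | None => Some s.2
            | Some s' => exec P f s'
            end
  end.

Definition init_state (input : seq nat) : nat * (nat -> nat) :=
  (0, fun i => nth 0 input i).

(* input size: total binary length of the input words (each word >= 1 bit) *)
Definition input_size (input : seq nat) : nat :=
  \sum_(x <- input) (trunc_log 2 x).+1.

Definition encode_instance (n v : nat) (L : seq label) : seq nat :=
  [:: n, v, size L & flatten [seq [:: x.1.1; x.1.2; x.2] | x <- L]].

Definition decode_output (M : nat -> nat) : seq label :=
  [seq (M (1 + 3 * j), M (2 + 3 * j), M (3 + 3 * j)) | j <- iota 0 (M 0)].

From mathcomp Require Import all_boot zify.
Set Implicit Arguments. Unset Strict Implicit. Unset Printing Implicit Defensive.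

(* A delay only moves a label later, so a temporal path of any delayed graph,
   with its delays forgotten, is a walk of the original graph along which one
   may wait at the vertices; its arrival time is bounded below by the clock of
   that walk, computed as if waiting were free.  Bellman-Ford relaxation finds
   the least clock of every vertex over all walks from the source, and
   [2 * size L + 1] rounds suffice because a walk repeating a vertex can be
   shortcut without delaying it.  Delaying every label to the smaller clock of
   its endpoints then realises all least clocks at once by genuine temporal
   paths, so the resulting graph is an optimal solution.  A unit-cost RAM
   program computes it in [O(size L ^ 2)] steps. *)

Fixpoint walk (L : seq label) (x : nat) (p : seq (nat * nat)) (y : nat) : Prop :=
  match p with
  | [::] => x = y
  | (z, t) :: p' => has_label L x z t /\ walk L z p' y
  end.

(* Clock values are arrival times shifted by one, so that [0] can encode
   "not reached": after arriving with clock [a], i.e. at time [a - 1], a label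
   [t] is best delayed to [maxn a t], which yields clock [(maxn a t).+1]. *)
Fixpoint clock_after (a : nat) (p : seq (nat * nat)) : nat :=
  match p with
  | [::] => a
  | (_, t) :: p' => clock_after (maxn a t).+1 p'
  end.

Lemma last_take T (x : T) s k : k <= size s -> last x (take k s) = nth x (x :: s) k.
Proof.
elim: s x k => [|a s IH] x [|k] //= hk; rewrite IH //.
by case: k hk => //= k hk; apply: set_nth_default; lia.
Qed.

Section Walks.
Variable L : seq label.

Lemma leq_clock_after a p : a <= clock_after a p.
Proof. by elim: p a => [|[z t] p IH] a //=; apply: leq_trans (IH _); lia. Qed.

Lemma clock_after_mono a b p : a <= b -> clock_after a p <= clock_after b p.
Proof. by elim: p a b => [|[z t] p IH] a b //= h; apply: IH; lia. Qed.

Lemma clock_after_cat a p q : clock_after a (p ++ q) = clock_after (clock_after a p) q.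
Proof. by elim: p a => [|[z t] p IH] a //=. Qed.

Lemma clock_after_rcons a p z t : clock_after a (rcons p (z, t)) = (maxn (clock_after a p) t).+1.
Proof. by rewrite -cats1 clock_after_cat. Qed.

Lemma walk_cat x p q y :
  walk L x (p ++ q) y <-> exists z, walk L x p z /\ walk L z q y.
Proof.
elim: p x => [|[z t] p IH] x /=; first by split; [move=> h; exists x | move=> [z [->]]].
split; first by move=> [hl /IH [z' [hp hq]]]; exists z'.
by move=> [z' [[hl hp] hq]]; split=> //; apply/IH; exists z'.
Qed.

Lemma walk_rcons x p z t y :
  walk L x (rcons p (z, t)) y <-> exists w, [/\ walk L x p w, has_label L w z t & z = y].
Proof.
rewrite -cats1 walk_cat; split; first by move=> [w [hp /= [hl hz]]]; exists w.
by move=> [w [hp hl hz]]; exists w.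
Qed.

Lemma walk_last x p y : walk L x p y -> y = last x (map fst p).
Proof. by elim: p x => [|[z t] p IH] x //= [_ /IH]. Qed.

Definition endpoints := flatten [seq [:: l.1.1; l.1.2] | l <- L].

Lemma size_endpoints : size endpoints = 2 * size L.
Proof. by rewrite /endpoints; elim: L => [|l ls IH] //=; rewrite IH; lia. Qed.

Lemma has_label_endpoints x z t : has_label L x z t -> z \in endpoints.
Proof.
rewrite /endpoints => -[] h; apply/flattenP.
  by exists [:: x; z]; [apply/mapP; exists (x, z, t) | rewrite !inE eqxx orbT].
by exists [:: z; x]; [apply/mapP; exists (z, x, t) | rewrite !inE eqxx].
Qed.

Lemma walk_endpoints x p y : walk L x p y -> {subset map fst p <= endpoints}.
Proof.
elim: p x => [|[z t] p IH] x //= [hl hp] w; rewrite inE => /orP [/eqP ->|h].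
  exact: has_label_endpoints hl.
exact: IH hp _ h.
Qed.

(* A walk visiting more than [2 * size L + 1] vertices repeats one; cutting
   out the cycle cannot delay the clock, by monotonicity. *)
Lemma walk_shorten a x p y : walk L x p y ->
  exists q, [/\ walk L x q y, clock_after a q <= clock_after a p & size q <= 2 * size L].
Proof.
elim: {p}(size p) {-2}p (leqnn (size p)) => [|N IH] p hN hp.
  by exists p; split => //; lia.
have [hsz|hsz] := leqP (size p) (2 * size L); first by exists p.
have /(uniqPn x) [i [j [hij hj he]]] : ~~ uniq (x :: map fst p).
  apply/negP => hu.
  have sub : {subset x :: map fst p <= x :: endpoints}.
    by move=> w; rewrite !inE => /orP [->//|h]; rewrite (walk_endpoints hp h) orbT.
  by have := uniq_leq_size hu sub; rewrite /= size_map size_endpoints; lia.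
move: hj; rewrite /= size_map ltnS => hj.
set c := nth x (x :: map fst p) i.
have ep : p = take i p ++ (take (j - i) (drop i p) ++ drop (j - i) (drop i p)).
  by rewrite !cat_take_drop.
move: (hp); rewrite ep => /walk_cat [c1 [h1 /walk_cat [c2 [h2 h3]]]].
have ec1 : c1 = c by rewrite (walk_last h1) map_take last_take // size_map; lia.
have ec2 : c2 = c.
  rewrite (walk_last h2) map_take last_take ?size_map ?size_drop; last lia.
  rewrite -[j - i]prednK; last lia.
  rewrite /= map_drop nth_drop (set_nth_default x); last by rewrite size_map; lia.
  rewrite /c he; case: j hij hj {he ep h2 h3} => [|j] hij hj //=.
  by congr nth; lia.
set q := take i p ++ drop (j - i) (drop i p).
have hq : walk L x q y by apply/walk_cat; exists c; rewrite -{1}ec1 -ec2.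
have hqs : size q <= N.
  by rewrite /q size_cat size_take !size_drop (_ : (i < size p) = true); [lia|apply/idP; lia].
have [q' [h1' h2' h3']] := IH q hqs hq.
exists q'; split => //; apply: leq_trans h2' _.
by rewrite {2}ep /q !clock_after_cat; apply: clock_after_mono; exact: leq_clock_after.
Qed.

End Walks.

Definition relax_clock (sx sz t : nat) : nat :=
  if sx == 0 then sz else if sz == 0 then (maxn sx t).+1 else minn sz (maxn sx t).+1.

Definition relax (s : nat -> nat) (x z t : nat) : nat -> nat :=
  fun y => if y == z then relax_clock (s x) (s z) t else s y.

Definition relax_label (s : nat -> nat) (l : label) : nat -> nat :=
  relax (relax s l.1.1 l.1.2 l.2) l.1.2 l.1.1 l.2.

Definition bf_round (L : seq label) (s : nat -> nat) : nat -> nat := foldl relax_label s L.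

Definition source_clock (v : nat) : nat -> nat := fun y => if y == v then 1 else 0.

Definition bf_clock (L : seq label) (v : nat) : nat -> nat :=
  iter (2 * size L).+1 (bf_round L) (source_clock v).

Definition improves (a b : nat) : Prop := b = 0 \/ (a != 0 /\ a <= b).

Lemma improves_trans a b c : improves a b -> improves b c -> improves a c.
Proof. by rewrite /improves; lia. Qed.

Lemma improvesW a b : improves a b -> b != 0 -> a != 0 /\ a <= b.
Proof. by rewrite /improves; lia. Qed.

Lemma relax_improves s x z t y : improves (relax s x z t y) (s y).
Proof.
rewrite /improves /relax /relax_clock.
by case: (y =P z) => [->|_]; [case: (s x =P 0); case: (s z =P 0)|]; lia.
Qed.

Lemma relax_at s x z t : relax s x z t z = relax_clock (s x) (s z) t.
Proof. by rewrite /relax eqxx. Qed.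

Lemma relax_clock_le sx sz t : sx != 0 ->
  relax_clock sx sz t != 0 /\ relax_clock sx sz t <= (maxn sx t).+1.
Proof. by rewrite /relax_clock => /negbTE ->; case: (sz =P 0); lia. Qed.

Lemma foldl_relax_label_improves ls s y : improves (foldl relax_label s ls y) (s y).
Proof.
elim: ls s => [|l ls IH] s /=; first by rewrite /improves; lia.
apply: improves_trans (IH _) _.
exact: improves_trans (relax_improves _ _ _ _ _) (relax_improves _ _ _ _ _).
Qed.

Lemma relax_label_edge s l x z t : l = (x, z, t) \/ l = (z, x, t) -> s x != 0 ->
  relax_label s l z != 0 /\ relax_label s l z <= (maxn (s x) t).+1.
Proof.
rewrite /relax_label => -[] -> hx /=.
  have [h1 h2] := relax_clock_le (s z) t hx.
  have hz : relax s x z t z != 0 by rewrite relax_at.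
  have [h3 h4] := improvesW (relax_improves (relax s x z t) z x t z) hz.
  by rewrite relax_at in h2 h4; lia.
have [h1 h2] := improvesW (relax_improves s z x t x) hx.
have [h3 h4] := relax_clock_le (relax s z x t z) t h1.
by rewrite relax_at; split => //; apply: leq_trans h4 _; lia.
Qed.

Lemma foldl_relax_label_relaxes ls s x z t : has_label ls x z t -> s x != 0 ->
  foldl relax_label s ls z != 0 /\ foldl relax_label s ls z <= (maxn (s x) t).+1.
Proof.
elim: ls s => [|l ls IH] s hl hx /=; first by case: hl.
have [e|hl'] : (l = (x, z, t) \/ l = (z, x, t)) \/ has_label ls x z t.
  by case: hl; rewrite inE => /orP [/eqP <-|h];
    by [left; left | right; left | left; right | right; right].
  have [h1 h2] := relax_label_edge e hx.
  by have := improvesW (foldl_relax_label_improves ls (relax_label s l) z) h1; lia.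
have [h1 h2] := improvesW (foldl_relax_label_improves [:: l] s x) hx.
by have [h3 h4] := IH _ hl' h1; split => //; apply: leq_trans h4 _; lia.
Qed.

Section BellmanFord.
Variables (L : seq label) (v : nat).

Definition clock_realized (s : nat -> nat) : Prop :=
  forall y, s y != 0 -> exists p, walk L v p y /\ clock_after 1 p <= s y.

Definition clock_bounded (k : nat) (s : nat -> nat) : Prop :=
  forall p y, walk L v p y -> size p <= k -> s y != 0 /\ s y <= clock_after 1 p.

Lemma relax_realized s x z t : has_label L x z t -> clock_realized s -> clock_realized (relax s x z t).
Proof.
move=> hl hs y; rewrite /relax /relax_clock; case: (y =P z) => [->|_]; last exact: hs.
case: (s x =P 0) => hx; first exact: hs.
have [p [hp hw]] := hs x (introN eqP hx).
have hp' : walk L v (rcons p (z, t)) z by apply/walk_rcons; exists x.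
have hw' : clock_after 1 (rcons p (z, t)) <= (maxn (s x) t).+1 by rewrite clock_after_rcons; lia.
case: (s z =P 0) => hz _; first by exists (rcons p (z, t)).
have [q [hq hwq]] := hs z (introN eqP hz).
by case: (leqP (s z) (maxn (s x) t).+1) => hc; [exists q | exists (rcons p (z, t))]; split => //; lia.
Qed.

Lemma bf_round_realized s : clock_realized s -> clock_realized (bf_round L s).
Proof.
rewrite /bf_round; have : {subset L <= L} by [].
elim: {1 3}L s => [|[[x z] t] ls IH] s //= hsub hs.
have hl : (x, z, t) \in L by apply: hsub; rewrite inE eqxx.
apply: IH; first by move=> l hl'; apply: hsub; rewrite inE hl' orbT.
by apply: relax_realized; [right | apply: relax_realized => //; left].
Qed.

Lemma bf_round_bounded k s : clock_bounded k s -> clock_bounded k.+1 (bf_round L s).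
Proof.
move=> hc p y; case/lastP: p => [|p [z t]] hp hsz.
  have [h1 h2] := hc [::] y hp isT.
  by have := improvesW (foldl_relax_label_improves L s y) h1; rewrite /bf_round; lia.
move/walk_rcons: hp => [x [hp hl <-]].
rewrite size_rcons ltnS in hsz.
have [h1 h2] := hc p x hp hsz.
have [h3 h4] := foldl_relax_label_relaxes hl h1.
by rewrite /bf_round clock_after_rcons; split => //; apply: leq_trans h4 _; lia.
Qed.

Lemma bf_iter_realized k : clock_realized (iter k (bf_round L) (source_clock v)).
Proof.
elim: k => [|k IH]; last exact: bf_round_realized.
move=> y; rewrite /clock_realized /source_clock /=; case: (y =P v) => [->|_] //= _; by exists [::]; split.
Qed.

Lemma bf_iter_bounded k : clock_bounded k (iter k (bf_round L) (source_clock v)).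
Proof.
elim: k => [|k IH]; last exact: bf_round_bounded.
by move=> [|[z t] p] y //= -> _; rewrite /source_clock eqxx.
Qed.

Lemma bf_clock_realized : clock_realized (bf_clock L v).
Proof. exact: bf_iter_realized. Qed.

Lemma bf_clock_le_walk p y : walk L v p y ->
  bf_clock L v y != 0 /\ bf_clock L v y <= clock_after 1 p.
Proof.
move=> hp; have [q [hq hw hs]] := walk_shorten 1 hp.
have [h1 h2] := bf_iter_bounded hq (leqW hs).
by split => //; apply: leq_trans h2 hw.
Qed.

Lemma bf_clock_relaxed x z t : has_label L x z t -> bf_clock L v x != 0 ->
  bf_clock L v z <= (maxn (bf_clock L v x) t).+1.
Proof.
move=> hl /bf_clock_realized [p [hp hw]].
have hq : walk L v (rcons p (z, t)) z by apply/walk_rcons; exists x.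
have [_ h] := bf_clock_le_walk hq; apply: leq_trans h _; rewrite clock_after_rcons; lia.
Qed.

Lemma bf_clock_pred y : y != v -> bf_clock L v y != 0 -> exists x t,
  [/\ has_label L x y t, bf_clock L v x != 0 & bf_clock L v y = (maxn (bf_clock L v x) t).+1].
Proof.
move=> hyv /bf_clock_realized [p []]; case/lastP: p => [|p [z t]] /=.
  by move=> e; rewrite e eqxx in hyv.
move=> /walk_rcons [x [hp hl <-]]; rewrite clock_after_rcons => hw.
have [h1 h2] := bf_clock_le_walk hp.
by exists x, t; split => //; have := bf_clock_relaxed hl h1; lia.
Qed.

End BellmanFord.

Lemma has_label_delayed L L' x z t' : delayed_from L L' -> has_label L' x z t' ->
  exists2 t, t <= t' & has_label L x z t.
Proof.
move=> [d hd] hl.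
have hmem a b : (a, b, t') \in L' -> exists2 t, t <= t' & (a, b, t) \in L.
  by rewrite hd => /mapP [[[a' b'] c] hin [-> -> ->]]; exists c => //; apply: leq_addr.
by case: hl => /hmem [t h1 h2]; exists t => //; [left | right].
Qed.

Lemma tpath_walk L L' x prev p y a : delayed_from L L' -> is_tpath L' x prev p y ->
  a <= prev.+1 -> exists q, walk L x q y /\ clock_after a q <= (last prev (map snd p)).+1.
Proof.
move=> hd; elim: p x prev a => [|[z t'] p IH] x prev a /=; first by move=> -> ha; exists [::]; split.
move=> [hl hlt hp] ha; have [t htt hl'] := has_label_delayed hd hl.
have [q [hq hw]] := IH z t' (maxn a t).+1 hp ltac:(lia).
by exists ((z, t) :: q).
Qed.

Lemma tpath_rcons L x prev p y z t : is_tpath L x prev p y -> has_label L y z t ->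
  last prev (map snd p) < t -> is_tpath L x prev (rcons p (z, t)) z.
Proof.
elim: p x prev => [|[w t'] p IH] x prev /=; first by move=> -> hl ht.
by move=> [h1 h2 h3] hl ht; split => //; apply: IH.
Qed.

Lemma tpath_eq_mem L L' x prev p y : L =i L' -> is_tpath L x prev p y -> is_tpath L' x prev p y.
Proof.
move=> e; elim: p x prev => [|[z t] p IH] x prev //= [h1 h2 h3]; split => //; last exact: IH.
by rewrite /has_label -!e.
Qed.

(* The smaller clock of the endpoints exceeds the earlier arrival at them by
   one, so the delayed label is the first one usable after that arrival. *)
Definition bf_delay (s : nat -> nat) (l : label) : label :=
  (l.1.1, l.1.2, maxn l.2 (minn (s l.1.1) (s l.1.2))).

Definition bf_labels (L : seq label) (v : nat) : seq label := map (bf_delay (bf_clock L v)) L.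

Section BellmanFordLabels.
Variables (L : seq label) (v : nat).
Local Notation s := (bf_clock L v).

Lemma bf_labels_delayed : delayed_from L (bf_labels L v).
Proof.
exists (fun l => maxn l.2 (minn (s l.1.1) (s l.1.2)) - l.2) => l.
by rewrite /bf_labels; congr (l \in _); apply: eq_map => -[[u w] t]; rewrite /bf_delay /=; congr (_, _, _); lia.
Qed.

Lemma bf_labels_tpath y : s y != 0 ->
  exists p, is_tpath (bf_labels L v) v 0 p y /\ arrival p <= (s y).-1.
Proof.
elim: {y}(s y) {-2}y (leqnn (s y)) => [|N IH] y hN hy; first by move: hy hN; lia.
have [->|hyv] := eqVneq y v; first by exists [::].
have [x [t [hl hx e]]] := bf_clock_pred hyv hy.
have [p [hp ha]] := IH x ltac:(lia) hx.
exists (rcons p (y, (s y).-1)); split; last by rewrite /arrival map_rcons last_rcons.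
apply: (tpath_rcons hp); last by move: ha; rewrite /arrival; lia.
case: hl => h; [left | right]; apply/mapP;
  [exists (x, y, t) | exists (y, x, t)] => //; rewrite /bf_delay /=; congr (_, _, _); lia.
Qed.

Lemma bf_clock_lower_bound n L' T y : delayed_from L L' -> reaches_all_by n L' v T ->
  y < n -> s y != 0 /\ (s y).-1 <= T.
Proof.
move=> hd hr /hr [p [hp ha]].
have [q [hq hw]] := tpath_walk hd hp (isT : 1 <= 1).
have [h1 h2] := bf_clock_le_walk hq.
by split => //; move: ha; rewrite /arrival; lia.
Qed.

Lemma bf_labels_optimal n L_out : L_out =i bf_labels L v ->
  (exists L', reachfast_solution n L v L') -> reachfast_optimal n L v L_out.
Proof.
move=> e [L' [hd' [T hT]]].
have hd : delayed_from L L_out.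
  by have [d hd] := bf_labels_delayed; exists d => l; rewrite e hd.
set T_opt := \max_(y < n) (s y).-1.
have hreach : reaches_all_by n L_out v T_opt.
  move=> y hy; have [hs _] := bf_clock_lower_bound hd' hT hy.
  have [p [hp ha]] := bf_labels_tpath hs.
  exists p; split; first by apply: tpath_eq_mem hp => l; rewrite e.
  exact: leq_trans ha (leq_bigmax_cond (Ordinal hy) _).
have hmin L'' T'' : delayed_from L L'' -> reaches_all_by n L'' v T'' -> T_opt <= T''.
  move=> hd'' hr; apply/bigmax_leqP => y _.
  exact: (bf_clock_lower_bound hd'' hr (ltn_ord y)).2.
split; first by split => //; exists T_opt.
exists T_opt; split; first by split => // T''; apply: hmin.
by move=> L'' T'' [hd'' _] [hr'' _]; apply: hmin hr''.
Qed.

End BellmanFordLabels.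

Fixpoint steps (P : seq instr) (k : nat) (s : nat * (nat -> nat)) : option (nat * (nat -> nat)) :=
  match k with
  | 0 => Some s
  | k.+1 => if step P s is Some s' then steps P k s' else None
  end.

Lemma steps_add P s s1 s2 a b :
  steps P a s = Some s1 -> steps P b s1 = Some s2 -> steps P (a + b) s = Some s2.
Proof.
elim: a s => [|a IH] s /=; first by move=> [->].
by case: (step P s) => // s' h1 h2; apply: IH h1 h2.
Qed.

Lemma exec_steps P s s' k f : steps P k s = Some s' -> exec P (k + f) s = exec P f s'.
Proof.
elim: k s => [|k IH] s /=; first by move=> [->].
by case: (step P s) => // s' h; apply: IH.
Qed.

Definition runs (P : seq instr) (pc : nat) (M : nat -> nat) (pc' B : nat)
    (Q : (nat -> nat) -> Prop) : Prop :=
  exists n M', [/\ steps P n (pc, M) = Some (pc', M'), n <= B & Q M'].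

Lemma stepsS P k s s' : step P s = Some s' -> steps P k.+1 s = steps P k s'.
Proof. by move=> /= ->. Qed.

Lemma runs_step P pc M pc1 M1 pc' B Q : step P (pc, M) = Some (pc1, M1) -> 0 < B ->
  runs P pc1 M1 pc' (B - 1) Q -> runs P pc M pc' B Q.
Proof.
move=> hs hB [n [M' [h1 h2 h3]]]; exists n.+1, M'.
by rewrite (stepsS _ hs); split => //; lia.
Qed.

Lemma runs_done P pc M B (Q : (nat -> nat) -> Prop) : Q M -> runs P pc M pc B Q.
Proof. by move=> q; exists 0, M. Qed.

Lemma runs_seq P pc1 pc2 pc3 M b B (R Q : (nat -> nat) -> Prop) :
  runs P pc1 M pc2 b R -> b <= B ->
  (forall M1, R M1 -> runs P pc2 M1 pc3 (B - b) Q) -> runs P pc1 M pc3 B Q.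
Proof.
move=> [n1 [M1 [r1 h1 q1]]] hb /(_ _ q1) [n2 [M2 [r2 h2 q2]]].
by exists (n1 + n2), M2; split; [apply: steps_add r1 r2 | lia |].
Qed.

Lemma runs_weaken P pc M pc' b B Q : runs P pc M pc' b Q -> b <= B -> runs P pc M pc' B Q.
Proof. by move=> [n [M' [h1 h2 h3]]] hb; exists n, M'; split => //; lia. Qed.

Lemma runs_impl P pc M pc' B (Q R : (nat -> nat) -> Prop) :
  runs P pc M pc' B Q -> (forall M', Q M' -> R M') -> runs P pc M pc' B R.
Proof. by move=> [n [M' [h1 h2 h3]]] hQR; exists n, M'; split => //; apply: hQR. Qed.

Lemma runs_exec P pc M pc' B Q fuel : runs P pc M pc' B Q -> nth IHalt P pc' = IHalt ->
  B < fuel -> exists2 M', exec P fuel (pc, M) = Some M' & Q M'.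
Proof.
move=> [n [M' [hr hn hq]]] hhalt hf; exists M' => //.
have hnf : n <= fuel by lia.
rewrite -(subnKC hnf) (exec_steps _ hr).
by case E: (fuel - n) => [|f]; [lia | rewrite /= hhalt].
Qed.

Lemma upd_eq M r x i : i = r -> upd M r x i = x.
Proof. by move=> ->; rewrite /upd eqxx. Qed.

Lemma upd_ne M r x i : i <> r -> upd M r x i = M i.
Proof. by move=> /eqP h; rewrite /upd (negbTE h). Qed.

Global Opaque upd.

Ltac simpl_mem := repeat match goal with
 | |- context [upd ?M ?r ?x ?i] =>
   lazymatch i with context [upd] => fail | _ =>
   lazymatch r with context [upd] => fail | _ =>
     first [ rewrite (@upd_ne M r x i); [|discriminate]
           | rewrite (@upd_eq M r x i); [|reflexivity]
           | rewrite (@upd_eq M r x i); [|by lia]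
           | rewrite (@upd_ne M r x i); [|by lia] ] end end
 end.

Ltac run_step := eapply runs_step; [reflexivity | lia |]; cbv beta iota; simpl_mem.
Ltac run_done := apply: runs_done; simpl_mem.
Ltac jump_taken := rewrite ifT; [|apply/eqP; lia].
Ltac jump_not_taken := rewrite ifF; [|apply/eqP; lia].
Ltac rewrite_frame H := match type of H with forall a, _ -> ?M a = _ =>
  repeat match goal with |- context [M ?a] => rewrite (H a); [|lia] end end.
Ltac normalize_written v :=
  lazymatch goal with |- runs _ _ (upd _ _ ?x) _ _ _ => rewrite (_ : x = v); [|lia] end.

(* Only truncated subtraction is available: [maxn a b = a + (b - a)] and
   [minn a b = a - (a - b)]. *)
Definition relax_code (b : nat) : seq instr :=
 [:: IAdd 14 4 11; ILoad 15 14; IJz 15 (b+12); ISub 18 10 15;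
     IAdd 16 15 18; IAdd 16 16 1; IAdd 14 4 12; ILoad 17 14;
     IJz 17 (b+11); ISub 18 17 16; ISub 16 17 18; IStore 14 16].

Definition fill_code : seq instr :=
  [seq IAdd c (25 + (c.-1 %% 3)) 13 | c <- [:: 1;2;3;4;5;6;7;8;9;10;11;12;14;15;16;17;18;19;20;21;22;23;24;13]].

(* Memory layout, for [m = size L > 0]: the input occupies cells
   [0 .. 3m+2]; registers are cells [1 .. 24], and cell 0 is a write pointer
   until it finally receives the output size; the label words are copied to
   [32m+2 ..] (register 3 points there) and the clock of vertex [y] is kept
   in cell [64m+4+y] (register 4 points there); cell 13 always holds 0, so
   [IJz 13] is an unconditional jump.  The output labels are written from
   cell 25 on, i.e. as output labels 8, 9, ...; the first eight output slots
   overlap the registers and are finally overwritten with copies of the first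
   output label, which is harmless since label lists are read as sets.  The
   phases start at address 21 (copying the label words), 44 (the [2m+1]
   rounds), 47 (relaxing each label in both directions), 89 (emitting the
   delayed labels) and 112 (filling the first eight slots). *)
Definition prog : seq instr :=
 [:: IJz 2 139; IAdd 0 2 2; IAdd 0 0 0; IAdd 0 0 0; IAdd 0 0 0; IAdd 0 0 0;
     IStore 0 1; IConst 1 1; IAdd 0 0 1; IStore 0 2; IAdd 0 0 1; IStore 0 3;
     IAdd 0 0 1; IStore 0 4; IAdd 0 0 1; IStore 0 5;
  (*16*) IConst 3 6; IAdd 4 2 2; IAdd 4 4 2; IConst 5 3; ISub 4 4 5;
  (*21*) IJz 4 29; IAdd 0 0 1; ILoad 5 3; IStore 0 5; IAdd 3 3 1; ISub 4 4 1;
     IConst 5 0; IJz 5 21;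
  (*29*) IConst 13 0; IAdd 3 2 2; IAdd 3 3 3; IAdd 3 3 3; IAdd 3 3 3; IAdd 3 3 3;
  (*35*) IConst 18 2; IAdd 3 3 18; IAdd 4 3 3; ISub 14 3 18; ILoad 15 14;
  (*40*) IAdd 14 4 15; IStore 14 1; IAdd 5 2 2; IAdd 5 5 1;
  (*44*) IJz 5 86; IAdd 7 3 13; IAdd 6 2 13;
  (*47*) IJz 6 84; ILoad 8 7; IAdd 7 7 1; ILoad 9 7; IAdd 7 7 1; ILoad 10 7; IAdd 7 7 1;
  (*54*) IAdd 11 8 13; IAdd 12 9 13 ] ++ relax_code 56 ++
 [:: (*68*) IAdd 11 9 13; IAdd 12 8 13 ] ++ relax_code 70 ++
 [:: (*82*) ISub 6 6 1; IJz 13 47;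
  (*84*) ISub 5 5 1; IJz 13 44;
  (*86*) IAdd 7 3 13; IAdd 6 2 13; IConst 19 25;
  (*89*) IJz 6 112; ILoad 8 7; IAdd 7 7 1; ILoad 9 7; IAdd 7 7 1; ILoad 10 7; IAdd 7 7 1;
  (*96*) IAdd 14 4 8; ILoad 15 14; IAdd 14 4 9; ILoad 17 14;
  (*100*) ISub 18 15 17; ISub 18 15 18; ISub 18 18 10; IAdd 18 10 18;
  (*104*) IStore 19 8; IAdd 19 19 1; IStore 19 9; IAdd 19 19 1; IStore 19 18; IAdd 19 19 1;
  (*110*) ISub 6 6 1; IJz 13 89;
  (*112*) IConst 18 8; IAdd 0 2 18] ++ fill_code ++
 [:: (*138*) IHalt; (*139*) IConst 0 0; IHalt].

Lemma run_relax_code b M : b = 56 \/ b = 70 -> 19 <= M 4 -> M 1 = 1 ->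
  runs prog b M (b + 12) 12 (fun M' =>
    M' (M 4 + M 12) = relax_clock (M (M 4 + M 11)) (M (M 4 + M 12)) (M 10) /\
    forall a, a <> M 4 + M 12 -> a < 14 \/ 18 < a -> M' a = M a).
Proof.
move=> hb h4 h1; case: hb => ->; (run_step; run_step; run_step;
  case: eqP => hx; [ run_done; split; [by rewrite /relax_clock hx eqxx | by move=> a ha hr; simpl_mem] |];
  do 6 run_step; case: eqP => hz;
  [ run_step; run_done; split; [by rewrite /relax_clock hz eqxx (negPf (introN eqP hx)); lia | by move=> a ha hr; simpl_mem] |];
  do 3 run_step; run_done; split; [by rewrite /relax_clock (negPf (introN eqP hz)) (negPf (introN eqP hx)); lia | by move=> a ha hr; simpl_mem]).
Qed.

Lemma run_relax b M base s x z t : b = 56 \/ b = 70 -> M 4 = base -> 19 <= base -> M 1 = 1 ->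
  M 11 = x -> M 12 = z -> M 10 = t -> (forall y, M (base + y) = s y) ->
  runs prog b M (b + 12) 12 (fun M' => (forall y, M' (base + y) = relax s x z t y) /\
    forall a, a < 14 \/ 18 < a < base -> M' a = M a).
Proof.
move=> hb h4 hS h1 h11 h12 h10 hs.
apply: runs_impl (run_relax_code hb _ h1) _ => [|M' [e fr]]; first lia.
split => [y|a ha]; last by rewrite fr //; lia.
rewrite /relax; case: eqP => [->|hy]; first by rewrite -h4 -h12 e h4 h11 h12 h10 !hs.
by rewrite fr ?hs //; lia.
Qed.

Definition label_words (L : seq label) : seq nat := flatten [seq [:: l.1.1; l.1.2; l.2] | l <- L].

Lemma size_label_words L : size (label_words L) = 3 * size L.
Proof. by elim: L => [|l L IH] //=; rewrite IH; lia. Qed.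

Lemma label_words_nth L j : j < size L ->
  (nth 0 (label_words L) (3 * j), nth 0 (label_words L) (3 * j + 1),
   nth 0 (label_words L) (3 * j + 2)) = nth (0, 0, 0) L j.
Proof.
elim: L j => [|l L IH] [|j] hj //; first by case: l {hj} => [[u w] t].
by rewrite [RHS]/= -IH // !mulnS -!addnA.
Qed.

Section Verification.
Variable L : seq label.
Local Notation m := (size L).
Local Notation words := (label_words L).

Definition bf_memory (M : nat -> nat) (s : nat -> nat) : Prop :=
  [/\ M 1 = 1, M 2 = m, M 3 = 32*m+2, M 4 = 64*m+4 & [/\ M 13 = 0,
   forall i, i < 3*m -> M (32*m+2+i) = nth 0 words i & forall y, M (64*m+4+y) = s y]].

Lemma bf_memory_upd M s r x : 4 < r < 32*m+2 -> r != 13 -> bf_memory M s ->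
  bf_memory (upd M r x) s.
Proof.
move=> hr /eqP hr13 [h1 h2 h3 h4 [h13 hw hs]].
split; try by simpl_mem.
by split; [simpl_mem | move=> i hi | move=> y]; simpl_mem; [| exact: hw | exact: hs].
Qed.

Lemma bf_memory_label M s j : j < m -> bf_memory M s -> M 7 = 32*m+2+3*j ->
  [/\ M (M 7) = nth 0 words (3*j), M (M 7 + M 1) = nth 0 words (3*j+1)
     & M (M 7 + M 1 + M 1) = nth 0 words (3*j+2)].
Proof.
move=> hj [h1 _ _ _ [_ hw _]] ->; rewrite h1.
by split; rewrite -hw; try (congr M; lia); lia.
Qed.

Lemma run_edge M s j r : j < m -> bf_memory M s -> M 5 = r -> M 6 = m - j ->
  M 7 = 32*m+2+3*j ->
  runs prog 47 M 47 40 (fun M' => [/\ bf_memory M' (relax_label s (nth (0, 0, 0) L j)),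
    M' 5 = r, M' 6 = m - j.+1 & M' 7 = 32*m+2+3*j.+1]).
Proof.
move=> hj hM h5 h6 h7; have [r0 r1 r2] := bf_memory_label hj hM h7.
case: hM => h1 h2 h3 h4 [h13 hw hs]; rewrite -label_words_nth //.
set u := nth 0 words (3*j) in r0 *; set w := nth 0 words (3*j+1) in r1 *.
set t := nth 0 words (3*j+2) in r2 *.
run_step. jump_not_taken. do 8 run_step.
eapply runs_seq.
  apply: (run_relax (b:=56) (base:=64*m+4) (s:=s) (x:=u) (z:=w) (t:=t)); first (by left);
    try (by simpl_mem; rewrite ?r0 ?r1 ?r2 ?h13 ?addn0; lia).
  by move=> y; simpl_mem; rewrite hs.
  done.
move=> M2 [hs2 fr2].
run_step. rewrite_frame fr2. simpl_mem. run_step. rewrite_frame fr2. simpl_mem.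
eapply runs_seq.
  apply: (run_relax (b:=70) (base:=64*m+4) (s:=relax s u w t) (x:=w) (z:=u) (t:=t)); first (by right);
    try (by simpl_mem; rewrite_frame fr2; simpl_mem; rewrite ?r0 ?r1 ?r2 ?h13 ?addn0; lia).
  by move=> y; simpl_mem; rewrite hs2.
  done.
move=> M3 [hs3 fr3].
run_step. rewrite_frame fr3. simpl_mem. rewrite_frame fr2. simpl_mem.
run_step. rewrite_frame fr3. simpl_mem. rewrite_frame fr2. simpl_mem. jump_taken.
run_done. rewrite_frame fr3. simpl_mem. rewrite_frame fr2. simpl_mem.
split; try lia.
split; try (simpl_mem; rewrite_frame fr3; simpl_mem; rewrite_frame fr2; simpl_mem; lia).
split; first (simpl_mem; rewrite_frame fr3; simpl_mem; rewrite_frame fr2; simpl_mem; lia).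
- by move=> i hi; simpl_mem; rewrite_frame fr3; simpl_mem; rewrite_frame fr2; simpl_mem; apply: hw.
- by move=> y; simpl_mem; rewrite hs3.
Qed.

Lemma run_edges r k j M s : k = m - j -> j <= m -> bf_memory M s -> M 5 = r -> M 6 = k ->
  M 7 = 32*m+2+3*j ->
  runs prog 47 M 84 (40*k+1) (fun M' => bf_memory M' (foldl relax_label s (take k (drop j L))) /\ M' 5 = r).
Proof.
elim: k j M s => [|k IH] j M s hk hj hM h5 h6 h7.
  by run_step; jump_taken; run_done; rewrite take0.
apply: runs_seq (run_edge _ hM h5 _ h7) _ _ => //; try lia.
move=> M1 [hM1 h15 h16 h17].
rewrite (@drop_nth label (0, 0, 0)); last lia.
by apply: runs_weaken (IH j.+1 M1 _ _ _ hM1 h15 _ h17) _; lia.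
Qed.

Hypothesis L_nonempty : 0 < m.

Lemma run_rounds k M s : bf_memory M s -> M 5 = k ->
  runs prog 44 M 86 (k*(40*m+10)+1) (bf_memory^~ (iter k (bf_round L) s)).
Proof.
elim: k M s => [|k IH] M s hM h5; first by run_step; jump_taken; run_done.
rewrite iterSr; have hM' := hM; case: hM' => h1 h2 h3 h4 [h13 _ _].
run_step; jump_not_taken; run_step; run_step.
eapply runs_seq.
- apply: (run_edges (r := k.+1) (k := m) (j := 0) (s := s)); try by simpl_mem; lia.
  by do 2 (apply: bf_memory_upd; [lia | done |]).
- nia.
move=> M1 []; rewrite drop0 take_size => hM1 h15; have [h1' _ _ _ [h13' _ _]] := hM1.
run_step; run_step; jump_taken.
by apply: runs_weaken (IH _ _ _ _) _; [apply: bf_memory_upd => //; lia | simpl_mem; lia | nia].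
Qed.

Definition emitted (M : nat -> nat) (s : nat -> nat) (j : nat) : Prop :=
  forall j', j' < j ->
  (M (25+3*j'), M (26+3*j'), M (27+3*j')) = bf_delay s (nth (0, 0, 0) L j').

Lemma run_emit_label M s j : j < m -> bf_memory M s -> M 6 = m - j ->
  M 7 = 32*m+2+3*j -> M 19 = 25+3*j -> emitted M s j ->
  runs prog 89 M 89 25 (fun M' => [/\ bf_memory M' s, M' 6 = m - j.+1,
    M' 7 = 32*m+2+3*j.+1, M' 19 = 25+3*j.+1 & emitted M' s j.+1]).
Proof.
move=> hj hM h6 h7 h19 he; have [r0 r1 r2] := bf_memory_label hj hM h7.
have hM' := hM; case: hM' => h1 h2 h3 h4 [h13 hw hs].
set u := nth 0 words (3*j) in r0 *; set w := nth 0 words (3*j+1) in r1 *.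
set t := nth 0 words (3*j+2) in r2 *.
run_step. jump_not_taken. do 22 run_step. jump_taken.
run_done. rewrite ?r0 ?r1 ?r2 h4 !hs.
split; try lia.
  by repeat (apply: bf_memory_upd; [simpl_mem; lia | apply/eqP; simpl_mem; lia |]).
move=> j' hj'; have [->|hne] := eqVneq j' j.
  by rewrite -label_words_nth // /bf_delay /= -/u -/w -/t; simpl_mem; congr (_, _, _); lia.
by simpl_mem; apply: he; lia.
Qed.
Lemma run_emit s k j M : k = m - j -> j <= m -> bf_memory M s -> M 6 = k ->
  M 7 = 32*m+2+3*j -> M 19 = 25+3*j -> emitted M s j ->
  runs prog 89 M 112 (25*k+1) (fun M' => bf_memory M' s /\ emitted M' s m).
Proof.
elim: k j M => [|k IH] j M hk hj hM h6 h7 h19 he.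
  have ej : j = m by lia.
  by rewrite ej in he; run_step; jump_taken; run_done.
eapply runs_seq; first (apply: (run_emit_label _ hM _ h7 h19 he); lia); first lia.
move=> M1 [hM1 h16 h17 h19' he1].
by apply: runs_weaken (IH j.+1 M1 _ _ hM1 _ h17 h19' he1) _; lia.
Qed.

(* For the first eight slots, [i - 8] truncates to [0]: they repeat label [0]. *)
Lemma run_epilogue M s : bf_memory M s -> emitted M s m ->
  runs prog 112 M 138 26 (fun M' => M' 0 = m + 8 /\ forall i, i < m + 8 ->
    (M' (1+3*i), M' (2+3*i), M' (3+3*i)) = bf_delay s (nth (0, 0, 0) L (i - 8))).
Proof.
move=> [h1 h2 h3 h4 [h13 hw hs]] he.
do 26 run_step; run_done; split => [|i hi]; first lia.
rewrite -(he (i - 8)); last lia.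
case: (ltnP i 8) => hi8; last by simpl_mem; congr (_, _, _); congr M; lia.
by do 8 (case: i hi hi8 => [|i] hi hi8; first by simpl_mem; rewrite h13 !addn0).
Qed.

Variable M0 : nat -> nat.

(* Input cell [i] is copied to cell [32m-1+i]: the source (cell 1) lands at
   [32m] and label word [k] (cell [3+k]) at [32m+2+k]. *)
Definition copy_invariant (c : nat) (M : nat -> nat) : Prop :=
  [/\ M 0 = 32*m + c - 2, M 1 = 1, M 2 = m, M 3 = c & [/\ M 4 = 3*m+3-c,
   forall i, 1 <= i < c -> M (32*m-1+i) = M0 i,
   forall i, c <= i < 3*m+3 -> M i = M0 i &
   forall a, 64*m+4 <= a -> M a = 0]].

Lemma run_copy k c M : k = 3*m+3-c -> 6 <= c <= 3*m+3 -> copy_invariant c M ->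
  runs prog 21 M 29 (8*k+1) (copy_invariant (3*m+3)).
Proof.
elim: k c M => [|k IH] c M hk hc [h0 h1 h2 h3 [h4 hcp hun hz]].
  have ec : c = 3*m+3 by lia.
  run_step; jump_taken; run_done; rewrite -ec.
  by split; try lia; split; try lia.
run_step; jump_not_taken; do 7 run_step; rewrite eqxx.
apply: runs_weaken (IH c.+1 _ _ _ _) _; [lia | lia | | lia].
split; try (simpl_mem; lia); split; try (simpl_mem; lia).
- move=> i hi; simpl_mem; have [->|hne] := eqVneq i c.
    by simpl_mem; rewrite h3 hun //; lia.
  by simpl_mem; apply: hcp; lia.
- by move=> i hi; simpl_mem; apply: hun; lia.
- by move=> a ha; simpl_mem; apply: hz.
Qed.

Lemma run_prologue v : M0 1 = v -> M0 2 = m ->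
  (forall i, i < 3*m -> M0 (3+i) = nth 0 words i) -> (forall a, 3*m+3 <= a -> M0 a = 0) ->
  runs prog 0 M0 44 (24*m + 60) (fun M' => bf_memory M' (source_clock v) /\ M' 5 = 2*m+1).
Proof.
move=> h1 h2 hw hz.
run_step; jump_not_taken; do 5 run_step; normalize_written (32*m); do 15 run_step.
eapply runs_seq.
  apply: (run_copy (k:=3*m-3) (c:=6)); [lia | lia |].
  split; try (simpl_mem; lia); split; try (simpl_mem; lia).
  - move=> i hi.
    have : (i = 1) \/ (i = 2) \/ (i = 3) \/ (i = 4) \/ (i = 5) by lia.
    by case=> [->|[->|[->|[->|->]]]]; simpl_mem.
  - by move=> i hi; simpl_mem.
  - by move=> a ha; simpl_mem; apply: hz; lia.
  lia.
move=> M2 [g0 g1 g2 g3 [g4 gcp gun gz]].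
have gv : M2 (32*m) = v by rewrite (_ : 32*m = 32*m-1+1); [rewrite gcp //; lia | lia].
run_step; rewrite ?g0 ?g1 ?g2 ?g3 ?g4; run_step; rewrite ?g0 ?g1 ?g2 ?g3 ?g4.
do 4 run_step; normalize_written (32*m); do 3 run_step; normalize_written (64*m+4).
run_step; normalize_written (32*m); rewrite ?gv.
do 5 run_step.
run_done; rewrite ?gv ?g1 ?g2.
split; last lia.
split; try (simpl_mem; lia); split; first by simpl_mem.
- move=> i hi; simpl_mem.
  by rewrite (_ : 32*m+2+i = 32*m-1+(i+3)) ?gcp ?[i + 3]addnC ?hw; lia.
- move=> y; rewrite /source_clock; case: eqP => [->|hne]; simpl_mem => //.
  by apply: gz; lia.
Qed.

End Verification.

Definition prog_time (m : nat) : nat :=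
  (24*m + 60) + ((2*m+1)*(40*m+10) + 1) + 3 + (25*m + 1) + 26.

Lemma run_prog (L : seq label) n v : 0 < size L ->
  runs prog 0 (init_state (encode_instance n v L)).2 138 (prog_time (size L)) (fun M =>
    M 0 = size L + 8 /\ forall i, i < size L + 8 ->
    (M (1+3*i), M (2+3*i), M (3+3*i)) = bf_delay (bf_clock L v) (nth (0, 0, 0) L (i - 8))).
Proof.
move=> hm; set m := size L in hm *.
eapply runs_seq.
- apply: (run_prologue hm (v := v)) => // a ha.
  by rewrite /= nth_default //= size_label_words; lia.
- rewrite /prog_time; lia.
move=> M1 [hM1 h5].
eapply runs_seq; first exact (run_rounds hm hM1 h5).
  rewrite /prog_time; lia.
move=> M2 hM2; rewrite /prog_time.
have {}hM2 : bf_memory L M2 (bf_clock L v) by rewrite /bf_clock -addn1.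
have [h1 h2 h3 h4 [h13 _ _]] := hM2.
do 3 run_step.
eapply runs_seq.
- apply: (run_emit hm (s := bf_clock L v) (k := m) (j := 0)); try (by simpl_mem; lia).
    by repeat (apply: bf_memory_upd; [simpl_mem; lia | apply/eqP; simpl_mem; lia |]).
  by move=> j'; rewrite ltn0.
- nia.
move=> M3 [hM3 he3].
by apply: runs_weaken (run_epilogue hm hM3 he3) _; nia.
Qed.

Lemma run_prog_empty M : M 2 = 0 -> runs prog 0 M 140 2 (fun M' => M' 0 = 0).
Proof. by move=> h2; run_step; jump_taken; run_step; run_done. Qed.

Lemma decode_output_bf_delay (L : seq label) s M : 0 < size L -> M 0 = size L + 8 ->
  (forall i, i < size L + 8 ->
    (M (1+3*i), M (2+3*i), M (3+3*i)) = bf_delay s (nth (0, 0, 0) L (i - 8))) ->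
  decode_output M =i map (bf_delay s) L.
Proof.
move=> hL h0 hM l; rewrite /decode_output h0.
have -> : [seq (M (1 + 3 * j), M (2 + 3 * j), M (3 + 3 * j)) | j <- iota 0 (size L + 8)] =
    [seq bf_delay s (nth (0, 0, 0) L (j - 8)) | j <- iota 0 (size L + 8)].
  by apply/eq_in_map => i; rewrite mem_iota => /andP [_ hi]; apply: hM.
apply/mapP/mapP => [[i hi ->] | [l' hl ->]].
  have hlt : i - 8 < size L by move: hi; rewrite mem_iota; lia.
  by exists (nth (0, 0, 0) L (i - 8)) => //; exact: mem_nth.
exists (index l' L + 8); last by rewrite addnK nth_index.
by rewrite mem_iota add0n ltn_add2r index_mem.
Qed.

Lemma size_le_input_size s : size s <= input_size s.
Proof. by rewrite /input_size -sum1_size; apply: leq_sum. Qed.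

Lemma size_encode_instance n v L : size (encode_instance n v L) = 3 + 3 * size L.
Proof. by rewrite /= size_label_words. Qed.

Theorem theorem2 :
  exists (P : seq instr) (c k : nat),
    forall (n v : nat) (L : seq label),
      wf_tgraph n L -> v < n ->
      exists M : nat -> nat,
        exec P (c * (input_size (encode_instance n v L)).+1 ^ k)
             (init_state (encode_instance n v L)) = Some M /\
        ((exists L', reachfast_solution n L v L') ->
         reachfast_optimal n L v (decode_output M)).
Proof.
exists prog, 1000, 2 => n v L _ _.
have := size_le_input_size (encode_instance n v L); rewrite size_encode_instance.
set N := input_size _ => hS.
have [/size0nil eL | hm] := posnP (size L).
  subst L; have hfuel : 2 < 1000 * N.+1 ^ 2 by nia.
  have hm : (init_state (encode_instance n v [::])).2 2 = 0 by [].
  have [M hexec hM] := runs_exec (run_prog_empty hm) erefl hfuel.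
  exists M; split => // hsol; apply: bf_labels_optimal hsol => l.
  by rewrite /decode_output hM.
have hfuel : prog_time (size L) < 1000 * N.+1 ^ 2 by rewrite /prog_time; nia.
have [M hexec [h0 hM]] := runs_exec (run_prog n v hm) erefl hfuel.
exists M; split => // hsol; apply: bf_labels_optimal hsol.
exact: decode_output_bf_delay hm h0 hM.
Qed.
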